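(* Let $G$ be the two-player game with $A_1=\{\text{Faithful},\text{Philandering}\}$, $A_2=\{\text{Coy},\text{Fast}\}$ and fitness vectors $\pi(\text{Faithful},\text{Coy})=(2,2)$, $\pi(\text{Faithful},\text{Fast})=(5,5)$, $\pi(\text{Philandering},\text{Coy})=(0,0)$, $\pi(\text{Philandering},\text{Fast})=(15,-5)$. Then the pure strategy profile $(\text{Faithful},\text{Fast})$ is stable under perfect observability.
   Context: Preference types: $\Theta=\mathbb{R}^A$, $A=A_1\times A_2$ (utility functions on $A$, extended bilinearly to mixed profiles). $\mathcal{M}(\Theta^2)$ is the set of product distributions $\mu=\mu_1\times\mu_2$ on $\Theta^2$ with finitely supported marginals; $\operatorname{supp}\mu=\operatorname{supp}\mu_1\times\operatorname{supp}\mu_2$, $\mu_{-i}=\mu_j$ ($j\neq i$). Mutants: for nonempty $J\subseteq\{1,2\}$, a mutant sub-profile is $\tilde\theta_J\in\prod_{j\in J}(\Theta\setminus\operatorname{supp}\mu_j)$ with shares $\varepsilon\in(0,1)^{|J|}$, $\|\varepsilon\|=\max_j\varepsilon_j$; post-entry $\tilde\mu^\varepsilon_i=(1-\varepsilon_i)\mu_i+\varepsilon_i\delta_{\tilde\theta_i}$ for $i\in J$, $\tilde\mu^\varepsilon_i=\mu_i$ otherwise. Perfect observability: an equilibrium is a map $b:\operatorname{supp}\mu\to\Delta(A_1)\times\Delta(A_2)$ such that each $b(\theta)$ is a Nash equilibrium of the game with payoffs $\theta_1,\theta_2$; $B_1(\mu)$ is the set of these; $(\mu,b)$ is a configuration,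 with aggregate outcome $\varphi_{\mu,b}(a)=\sum_{\theta}\mu(\theta)\prod_i b_i(\theta)(a_i)$. Average fitness $\Pi_{\theta_i}(\mu;b)=\sum_{\theta'_{-i}}\mu_{-i}(\theta'_{-i})\pi_i(b(\theta_i,\theta'_{-i}))$. Balanced: equal average fitness of all types within each population. Focal set $B_1(\tilde\mu^\varepsilon;b)=\{\tilde b\in B_1(\tilde\mu^\varepsilon):\tilde b=b\text{ on }\operatorname{supp}\mu\}$. $(\mu,b)$ is stable if balanced and for every nonempty $J$ and every $\tilde\theta_J$ there is $\bar\epsilon\in(0,1)$ such that for all $\varepsilon$ with $\|\varepsilon\|<\bar\epsilon$ and all $\tilde b$ in the focal set, either (i) some $j\in J$ has $\Pi_{\theta_j}(\tilde\mu^\varepsilon;\tilde b)>\Pi_{\tilde\theta_j}(\tilde\mu^\varepsilon;\tilde b)$ for all $\theta_j\in\operatorname{supp}\mu_j$, or (ii) for every $i$ all types in $\operatorname{supp}\tilde\mu^\varepsilon_i$ have equal average fitness. A profile $\sigma$ is stable if $\varphi_\sigma(a)=\prod_i\sigma_i(a_i)$ is the aggregate outcome of a stable configuration. *)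

From Stdlib Require Import Reals List.
Import ListNotations.
Open Scope R_scope.

Inductive A1 : Type := Faithful | Philandering.
Inductive A2 : Type := Coy | Fast.

(* Preference types: utility functions on A = A1 x A2 *)
Definition Theta : Type := A1 -> A2 -> R.

Definition pi1 (a1 : A1) (a2 : A2) : R :=
  match a1, a2 with
  | Faithful, Coy => 2 | Faithful, Fast => 5
  | Philandering, Coy => 0 | Philandering, Fast => 15 end.
Definition pi2 (a1 : A1) (a2 : A2) : R :=
  match a1, a2 with
  | Faithful, Coy => 2 | Faithful, Fast => 5
  | Philandering, Coy => 0 | Philandering, Fast => -5 end.

Definition mixed1 (s : A1 -> R) : Prop :=
  0 <= s Faithful /\ 0 <= s Philandering /\ s Faithful + s Philandering = 1.
Definition mixed2 (s : A2 -> R) : Prop :=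
  0 <= s Coy /\ 0 <= s Fast /\ s Coy + s Fast = 1.

Definition eu (u : A1 -> A2 -> R) (s1 : A1 -> R) (s2 : A2 -> R) : R :=
  s1 Faithful * s2 Coy * u Faithful Coy + s1 Faithful * s2 Fast * u Faithful Fast
  + s1 Philandering * s2 Coy * u Philandering Coy
  + s1 Philandering * s2 Fast * u Philandering Fast.

Definition profile : Type := ((A1 -> R) * (A2 -> R))%type.

Definition nash (t1 t2 : Theta) (s : profile) : Prop :=
  mixed1 (fst s) /\ mixed2 (snd s) /\
  (forall s1', mixed1 s1' -> eu t1 s1' (snd s) <= eu t1 (fst s) (snd s)) /\
  (forall s2', mixed2 s2' -> eu t2 (fst s) s2' <= eu t2 (fst s) (snd s)).

(* Finitely supported distributions on Theta: list of (type, weight) with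
   distinct types, positive weights summing to 1. *)
Definition dist : Type := list (Theta * R).
Definition supp (m : dist) : list Theta := map fst m.
Definition lsum (m : dist) (f : Theta -> R -> R) : R :=
  fold_right (fun p acc => f (fst p) (snd p) + acc) 0 m.
Definition valid_dist (m : dist) : Prop :=
  NoDup (supp m) /\ (forall p, In p m -> 0 < snd p) /\ lsum m (fun _ w => w) = 1.

(* Equilibrium maps (only their values on supp mu matter) *)
Definition eqmap : Type := Theta -> Theta -> profile.

Definition B1 (mu1 mu2 : dist) (b : eqmap) : Prop :=
  forall t1 t2, In t1 (supp mu1) -> In t2 (supp mu2) -> nash t1 t2 (b t1 t2).

Definition Pi1 (mu2 : dist) (b : eqmap) (t1 : Theta) : R :=
  lsum mu2 (fun t2 w => w * eu pi1 (fst (b t1 t2)) (snd (b t1 t2))).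
Definition Pi2 (mu1 : dist) (b : eqmap) (t2 : Theta) : R :=
  lsum mu1 (fun t1 w => w * eu pi2 (fst (b t1 t2)) (snd (b t1 t2))).

Definition balanced (mu1 mu2 : dist) (b : eqmap) : Prop :=
  (forall t t', In t (supp mu1) -> In t' (supp mu1) -> Pi1 mu2 b t = Pi1 mu2 b t') /\
  (forall t t', In t (supp mu2) -> In t' (supp mu2) -> Pi2 mu1 b t = Pi2 mu1 b t').

(* Post-entry population (1 - e) mu + e delta_t *)
Definition entry (m : dist) (t : Theta) (e : R) : dist :=
  map (fun p => (fst p, (1 - e) * snd p)) m ++ [(t, e)].

Definition focal (mu1 mu2 mu1' mu2' : dist) (b b' : eqmap) : Prop :=
  B1 mu1' mu2' b' /\
  (forall t1 t2, In t1 (supp mu1) -> In t2 (supp mu2) -> b' t1 t2 = b t1 t2).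

(* Mutants indexed by J = {i | Ji = true}; t_i, e_i are only meaningful for i in J. *)
Definition resists (mu1 mu2 : dist) (b : eqmap) (J1 J2 : bool) (t1 t2 : Theta) : Prop :=
  exists ebar, 0 < ebar < 1 /\
  forall e1 e2 : R,
    (J1 = true -> 0 < e1 < ebar) -> (J2 = true -> 0 < e2 < ebar) ->
    let mu1' := if J1 then entry mu1 t1 e1 else mu1 in
    let mu2' := if J2 then entry mu2 t2 e2 else mu2 in
    forall b' : eqmap, focal mu1 mu2 mu1' mu2' b b' ->
      ((J1 = true /\ forall t, In t (supp mu1) -> Pi1 mu2' b' t > Pi1 mu2' b' t1) \/
       (J2 = true /\ forall t, In t (supp mu2) -> Pi2 mu1' b' t > Pi2 mu1' b' t2))
      \/ balanced mu1' mu2' b'.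

Definition stable_config (mu1 mu2 : dist) (b : eqmap) : Prop :=
  balanced mu1 mu2 b /\
  forall (J1 J2 : bool), (J1 = true \/ J2 = true) ->
  forall t1 t2 : Theta,
    (J1 = true -> ~ In t1 (supp mu1)) -> (J2 = true -> ~ In t2 (supp mu2)) ->
    resists mu1 mu2 b J1 J2 t1 t2.

Definition aggregate (mu1 mu2 : dist) (b : eqmap) (a1 : A1) (a2 : A2) : R :=
  lsum mu1 (fun t1 w1 => lsum mu2 (fun t2 w2 =>
    w1 * w2 * (fst (b t1 t2) a1 * snd (b t1 t2) a2))).

Definition stable_profile (s1 : A1 -> R) (s2 : A2 -> R) : Prop :=
  exists (mu1 mu2 : dist) (b : eqmap),
    valid_dist mu1 /\ valid_dist mu2 /\ B1 mu1 mu2 b /\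
    stable_config mu1 mu2 b /\
    (forall a1 a2, aggregate mu1 mu2 b a1 a2 = s1 a1 * s2 a2).

Definition pure1 (a : A1) : A1 -> R :=
  fun x => match a, x with
           | Faithful, Faithful | Philandering, Philandering => 1 | _, _ => 0 end.
Definition pure2 (a : A2) : A2 -> R :=
  fun x => match a, x with
           | Coy, Coy | Fast, Fast => 1 | _, _ => 0 end.

From Pilot Require Import Defs.
From Stdlib Require Import Reals List Psatz.
Import ListNotations.
Open Scope R_scope.

(* Both populations consist of a single type whose utility is 1 on
   (Philandering, Coy) and 0 elsewhere; the residents play (Faithful, Fast)
   and earn 5 each.  This type threatens: as row player it punishes any Coy
   by Philandering, as column player it punishes any Philandering by Coy.
   So against a resident column player no equilibrium puts weight on
   (Philandering, Fast), and the mutant's fitness equals its opponent's,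
   at most 5; against a resident row player no equilibrium puts weight on
   (Faithful, Coy), so the fitness pair lies on the segment x + y = 10 or
   has y <= 0.  No single mutant can thus earn more than 5, and when both
   populations are invaded by shares below 1/2, either some mutant earns
   strictly less than its residents or all fitnesses tie. *)

Definition fit1 (s : profile) : R := eu pi1 (fst s) (snd s).
Definition fit2 (s : profile) : R := eu pi2 (fst s) (snd s).

Definition mono (t : Theta) : Defs.dist := [(t, 1)].

Lemma valid_dist_mono t : valid_dist (mono t).
Proof.
  split; [constructor; [intros []|constructor]|].
  split; [intros p [<-|[]]; simpl; lra | simpl; lra].
Qed.

Lemma in_supp_mono t t' : In t' (supp (mono t)) -> t' = t.
Proof. simpl; intros [<-|[]]; reflexivity. Qed.

Lemma supp_mono t : In t (supp (mono t)).
Proof. left; reflexivity. Qed.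

Lemma in_supp_entry_mono t x e t' :
  In t' (supp (entry (mono t) x e)) -> t' = t \/ t' = x.
Proof. simpl; intros [<-|[<-|[]]]; auto. Qed.

Lemma supp_entry_resident t x e : In t (supp (entry (mono t) x e)).
Proof. left; reflexivity. Qed.

Lemma supp_entry_mutant t x e : In x (supp (entry (mono t) x e)).
Proof. right; left; reflexivity. Qed.

Lemma Pi1_mono t b t1 : Pi1 (mono t) b t1 = fit1 (b t1 t).
Proof. unfold Pi1, fit1; simpl; ring. Qed.

Lemma Pi2_mono t b t2 : Pi2 (mono t) b t2 = fit2 (b t t2).
Proof. unfold Pi2, fit2; simpl; ring. Qed.

Lemma Pi1_entry_mono t x e b t1 :
  Pi1 (entry (mono t) x e) b t1 = (1 - e) * fit1 (b t1 t) + e * fit1 (b t1 x).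
Proof. unfold Pi1, fit1; simpl; ring. Qed.

Lemma Pi2_entry_mono t x e b t2 :
  Pi2 (entry (mono t) x e) b t2 = (1 - e) * fit2 (b t t2) + e * fit2 (b x t2).
Proof. unfold Pi2, fit2; simpl; ring. Qed.

Lemma balanced_const mu1 mu2 b k1 k2 :
  (forall t, In t (supp mu1) -> Pi1 mu2 b t = k1) ->
  (forall t, In t (supp mu2) -> Pi2 mu1 b t = k2) ->
  balanced mu1 mu2 b.
Proof.
  intros H1 H2; split; intros t t' Ht Ht'.
  - rewrite (H1 t Ht), (H1 t' Ht'); reflexivity.
  - rewrite (H2 t Ht), (H2 t' Ht'); reflexivity.
Qed.

Definition resident : Theta := fun a1 a2 =>
  match a1, a2 with Philandering, Coy => 1 | _, _ => 0 end.

Definition resident_play : profile := (pure1 Faithful, pure2 Fast).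

Lemma fit1_resident_play : fit1 resident_play = 5.
Proof. unfold fit1, eu; simpl; ring. Qed.

Lemma fit2_resident_play : fit2 resident_play = 5.
Proof. unfold fit2, eu; simpl; ring. Qed.

Lemma nash_resident_play : nash resident resident resident_play.
Proof.
  unfold nash, mixed1, mixed2, eu; simpl.
  repeat split; try lra; intros s [h1 [h2 h3]]; lra.
Qed.

Lemma mixed_fit_bounds s : mixed1 (fst s) -> mixed2 (snd s) ->
  fit2 s <= 5 /\ fit1 s + fit2 s <= 10.
Proof.
  destruct s as [p q]; unfold mixed1, mixed2, fit1, fit2, eu; simpl.
  intros [h1 [h2 h3]] [k1 [k2 k3]].
  assert (0 <= p Faithful * q Coy) by nra.
  assert (0 <= p Faithful * q Fast) by nra.
  assert (0 <= p Philandering * q Coy) by nra.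
  assert (0 <= p Philandering * q Fast) by nra.
  assert (p Faithful * q Coy + p Faithful * q Fast + p Philandering * q Coy
          + p Philandering * q Fast = 1) by nra.
  split; lra.
Qed.

Lemma nash_resident2_PF t s : nash t resident s ->
  fst s Philandering * snd s Fast = 0.
Proof.
  destruct s as [p q]; intros [[h1 [h2 h3]] [[k1 [k2 k3]] [_ Hbr]]]; simpl in *.
  assert (Hcoy : mixed2 (pure2 Coy)) by (unfold mixed2; simpl; lra).
  specialize (Hbr _ Hcoy); unfold eu in Hbr; simpl in Hbr.
  nra.
Qed.

Lemma nash_resident1_FC t s : nash resident t s ->
  fst s Faithful * snd s Coy = 0.
Proof.
  destruct s as [p q]; intros [[h1 [h2 h3]] [[k1 [k2 k3]] [Hbr _]]]; simpl in *.
  assert (Hphil : mixed1 (pure1 Philandering)) by (unfold mixed1; simpl; lra).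
  specialize (Hbr _ Hphil); unfold eu in Hbr; simpl in Hbr.
  nra.
Qed.

Lemma fit_no_PF s : mixed1 (fst s) -> mixed2 (snd s) ->
  fst s Philandering * snd s Fast = 0 ->
  fit1 s = fit2 s /\ 0 <= fit1 s <= 5.
Proof.
  destruct s as [p q]; unfold mixed1, mixed2, fit1, fit2, eu; simpl.
  intros [h1 [h2 h3]] [k1 [k2 k3]] HPF.
  assert (0 <= p Faithful * q Coy) by nra.
  assert (0 <= p Faithful * q Fast) by nra.
  assert (p Faithful * q Coy + p Faithful * q Fast = p Faithful) by nra.
  split; [lra|split; lra].
Qed.

Lemma fit_no_FC s : mixed1 (fst s) -> mixed2 (snd s) ->
  fst s Faithful * snd s Coy = 0 ->
  fit1 s = 10 - fit2 s \/ (fit2 s <= 0 /\ 0 <= fit1 s).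
Proof.
  destruct s as [p q]; unfold mixed1, mixed2, fit1, fit2, eu; simpl.
  intros [h1 [h2 h3]] [k1 [k2 k3]] HFC.
  destruct (Rmult_integral _ _ HFC) as [HF|HC].
  - right; rewrite HF; replace (p Philandering) with 1 by lra; lra.
  - left; rewrite HC; replace (q Fast) with 1 by lra; lra.
Qed.

Lemma double_entry_payoffs e1 e2 a c al d1 d2 :
  0 < e1 < 1/2 -> 0 < e2 < 1/2 ->
  0 <= a <= 5 -> al <= 5 -> d2 <= 5 -> d1 + d2 <= 10 ->
  c = 10 - al \/ (al <= 0 /\ 0 <= c) ->
  (1 - e2) * a + e2 * d1 < (1 - e2) * 5 + e2 * c \/
  (1 - e1) * al + e1 * d2 < (1 - e1) * 5 + e1 * a \/
  ((1 - e2) * 5 + e2 * c = (1 - e2) * a + e2 * d1 /\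
   (1 - e1) * 5 + e1 * a = (1 - e1) * al + e1 * d2).
Proof.
  intros He1 He2 Ha Hal Hd2 Hd Hc.
  destruct (Rlt_or_le ((1 - e2) * a + e2 * d1) ((1 - e2) * 5 + e2 * c))
    as [L1|L1]; [left; exact L1|].
  destruct (Rlt_or_le ((1 - e1) * al + e1 * d2) ((1 - e1) * 5 + e1 * a))
    as [L2|L2]; [right; left; exact L2|].
  right; right.
  destruct Hc as [->|[Hal0 Hc0]]; [|exfalso; nra].
  assert (Ha_d2 : a <= d2) by nra.
  (* Adding the two no-loss conditions and using e2 < 1/2 forces a = al = 5. *)
  assert (Hsum : (1 - 2 * e2) * (5 - a) <= - e2 * (5 - al)) by nra.
  assert (a = 5) by nra.
  assert (al = 5) by nra.
  subst a al; assert (d2 = 5) by lra; subst d2.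
  split; nra.
Qed.

Definition resident_map : eqmap := fun _ _ => resident_play.

Lemma focal_mono t b mu1' mu2' b' :
  focal (mono t) (mono t) mu1' mu2' b b' -> b' t t = b t t.
Proof. intros [_ Hb]; apply Hb; apply supp_mono. Qed.

Lemma resists_row_mutant t1 t2 :
  resists (mono resident) (mono resident) resident_map true false t1 t2.
Proof.
  exists (1/2); split; [lra|].
  intros e1 e2 _ _; cbv beta iota zeta; intros b' Hfoc.
  assert (Hres : fit1 (b' resident resident) = 5).
  { rewrite (focal_mono _ _ _ _ _ Hfoc); apply fit1_resident_play. }
  assert (Hnash : nash t1 resident (b' t1 resident)).
  { apply (proj1 Hfoc); [apply supp_entry_mutant|apply supp_mono]. }
  pose proof Hnash as [Hm1 [Hm2 _]].
  destruct (fit_no_PF _ Hm1 Hm2 (nash_resident2_PF _ _ Hnash)) as [_ [_ Hle]].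
  destruct (Rle_lt_or_eq_dec _ _ Hle) as [Hlt|Heq].
  - left; left; split; [reflexivity|].
    intros t Ht; apply in_supp_mono in Ht; subst.
    rewrite !Pi1_mono, Hres; lra.
  - right; apply (balanced_const _ _ _ 5 (Pi2 (entry (mono resident) t1 e1) b' resident)).
    + intros t Ht; rewrite Pi1_mono.
      destruct (in_supp_entry_mono _ _ _ _ Ht); subst; [exact Hres|exact Heq].
    + intros t Ht; apply in_supp_mono in Ht; subst; reflexivity.
Qed.

Lemma resists_col_mutant t1 t2 :
  resists (mono resident) (mono resident) resident_map false true t1 t2.
Proof.
  exists (1/2); split; [lra|].
  intros e1 e2 _ _; cbv beta iota zeta; intros b' Hfoc.
  assert (Hres : fit2 (b' resident resident) = 5).
  { rewrite (focal_mono _ _ _ _ _ Hfoc); apply fit2_resident_play. }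
  assert (Hnash : nash resident t2 (b' resident t2)).
  { apply (proj1 Hfoc); [apply supp_mono|apply supp_entry_mutant]. }
  pose proof Hnash as [Hm1 [Hm2 _]].
  destruct (mixed_fit_bounds _ Hm1 Hm2) as [Hle _].
  destruct (Rle_lt_or_eq_dec _ _ Hle) as [Hlt|Heq].
  - left; right; split; [reflexivity|].
    intros t Ht; apply in_supp_mono in Ht; subst.
    rewrite !Pi2_mono, Hres; lra.
  - right; apply (balanced_const _ _ _ (Pi1 (entry (mono resident) t2 e2) b' resident) 5).
    + intros t Ht; apply in_supp_mono in Ht; subst; reflexivity.
    + intros t Ht; rewrite Pi2_mono.
      destruct (in_supp_entry_mono _ _ _ _ Ht); subst; [exact Hres|exact Heq].
Qed.

Lemma resists_both_mutants t1 t2 :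
  resists (mono resident) (mono resident) resident_map true true t1 t2.
Proof.
  exists (1/2); split; [lra|].
  intros e1 e2 He1 He2; specialize (He1 eq_refl); specialize (He2 eq_refl).
  cbv beta iota zeta; intros b' Hfoc.
  assert (Hrr : b' resident resident = resident_play)
    by exact (focal_mono _ _ _ _ _ Hfoc).
  assert (Hna : nash t1 resident (b' t1 resident)).
  { apply (proj1 Hfoc); [apply supp_entry_mutant|apply supp_entry_resident]. }
  assert (Hnr : nash resident t2 (b' resident t2)).
  { apply (proj1 Hfoc); [apply supp_entry_resident|apply supp_entry_mutant]. }
  assert (Hnm : nash t1 t2 (b' t1 t2)).
  { apply (proj1 Hfoc); apply supp_entry_mutant. }
  pose proof Hna as [Hm1 [Hm2 _]].
  destruct (fit_no_PF _ Hm1 Hm2 (nash_resident2_PF _ _ Hna)) as [Ha Ha_bnd].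
  pose proof Hnr as [Hr1 [Hr2 _]].
  destruct (mixed_fit_bounds _ Hr1 Hr2) as [Hal _].
  pose proof (fit_no_FC _ Hr1 Hr2 (nash_resident1_FC _ _ Hnr)) as Hc.
  pose proof Hnm as [Hmm1 [Hmm2 _]].
  destruct (mixed_fit_bounds _ Hmm1 Hmm2) as [Hd2 Hd].
  destruct (double_entry_payoffs e1 e2 _ _ _ _ _ He1 He2 Ha_bnd Hal Hd2 Hd Hc)
    as [Hlt|[Hlt|[Heq1 Heq2]]].
  - left; left; split; [reflexivity|].
    intros t Ht; apply in_supp_mono in Ht; subst.
    rewrite !Pi1_entry_mono, Hrr, fit1_resident_play; exact Hlt.
  - left; right; split; [reflexivity|].
    intros t Ht; apply in_supp_mono in Ht; subst.
    rewrite !Pi2_entry_mono, Hrr, fit2_resident_play, <- Ha; exact Hlt.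
  - right; apply (balanced_const _ _ _
      ((1 - e2) * 5 + e2 * fit1 (b' resident t2))
      ((1 - e1) * 5 + e1 * fit1 (b' t1 resident))).
    + intros t Ht; rewrite Pi1_entry_mono.
      destruct (in_supp_entry_mono _ _ _ _ Ht); subst;
        [rewrite Hrr, fit1_resident_play; reflexivity | symmetry; exact Heq1].
    + intros t Ht; rewrite Pi2_entry_mono.
      destruct (in_supp_entry_mono _ _ _ _ Ht); subst;
        [rewrite Hrr, fit2_resident_play, <- Ha; reflexivity | symmetry; exact Heq2].
Qed.

Lemma stable_config_resident :
  stable_config (mono resident) (mono resident) resident_map.
Proof.
  split.
  - apply (balanced_const _ _ _ 5 5); intros t Ht; apply in_supp_mono in Ht; subst.
    + rewrite Pi1_mono; apply fit1_resident_play.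
    + rewrite Pi2_mono; apply fit2_resident_play.
  - intros [|] [|] HJ t1 t2 _ _.
    + apply resists_both_mutants.
    + apply resists_row_mutant.
    + apply resists_col_mutant.
    + destruct HJ as [H|H]; discriminate.
Qed.

Theorem mainTheorem6 : stable_profile (pure1 Faithful) (pure2 Fast).
Proof.
  exists (mono resident), (mono resident), resident_map.
  split; [apply valid_dist_mono|].
  split; [apply valid_dist_mono|].
  split.
  { intros t1 t2 H1 H2; apply in_supp_mono in H1; apply in_supp_mono in H2; subst.
    exact nash_resident_play. }
  split; [exact stable_config_resident|].
  intros a1 a2; unfold aggregate, mono, resident_map; simpl; ring.
Qed.
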